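(* Let $\alpha(n)$ be a sequence of positive reals and fix a positive integer $d$. Suppose there exist real sequences $R(n)$, $\delta(n)$ and $C_r(n)$ ($r=0,\dots,d$) such that, as $n\to\infty$, $$\frac{\alpha(n+j)}{\alpha(n)R(n)^j}=C_0(n)+\sum_{r=1}^dC_r(n)\delta(n)^rj^r+o(\delta(n)^d)$$ for $j=1,\dots,d$. Suppose also that $\delta(n)>0$, $\delta(n)\to0$, and $C_r(n)\to c_r\in\mathbb R$ for each $r$. Then, as $n\to\infty$, coefficientwise, $$\frac{\delta(n)^{-d}}{\alpha(n)}J_\alpha^{d,n}\!\left(\frac{\delta(n)X-1}{R(n)}\right)\to d!\sum_{k=0}^d(-1)^{d-k}c_{d-k}\frac{X^k}{k!},$$ $$\frac{(R(n)\delta(n))^{-d}}{\alpha(n)}K_\alpha^{d,n}\!\bigl(R(n)(\delta(n)X-1)\bigr)\to d!\sum_{k=0}^dc_{d-k}\frac{X^k}{k!}.$$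
   Context: $J_\alpha^{d,n}(X)=\sum_{j=0}^d\binom dj\alpha(n+j)X^j$ and $K_\alpha^{d,n}(X)=X^dJ_\alpha^{d,n}(1/X)=\sum_{j=0}^d\binom dj\alpha(n+j)X^{d-j}$. *)

From HB Require Import structures.
From mathcomp Require Import all_boot all_order all_algebra.
From mathcomp Require Import all_classical all_reals all_analysis.
Set Implicit Arguments. Unset Strict Implicit. Unset Printing Implicit Defensive.
Import Order.TTheory GRing.Theory Num.Theory.
Local Open Scope ring_scope.

Definition Jpoly (R : realType) (alpha : nat -> R) (d n : nat) : {poly R} :=
  \sum_(j < d.+1) (('C(d, j))%:R * alpha (n + j)%N) *: 'X^j.

(* K_alpha^{d,n}(X) = X^d J(1/X) = \sum_{j=0}^d binom(d,j) alpha(n+j) X^(d-j) *)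
Definition Kpoly (R : realType) (alpha : nat -> R) (d n : nat) : {poly R} :=
  \sum_(j < d.+1) (('C(d, j))%:R * alpha (n + j)%N) *: 'X^(d - j).

Definition limJ (R : realType) (c : nat -> R) (d : nat) : {poly R} :=
  (d`!)%:R *: \sum_(k < d.+1) ((-1) ^+ (d - k) * c (d - k)%N / (k`!)%:R) *: 'X^k.

Definition limK (R : realType) (c : nat -> R) (d : nat) : {poly R} :=
  (d`!)%:R *: \sum_(k < d.+1) (c (d - k)%N / (k`!)%:R) *: 'X^k.

From HB Require Import structures.
From mathcomp Require Import all_boot all_order all_algebra.
From mathcomp Require Import all_classical all_reals all_analysis.
From mathcomp Require Import zify ring.
Import Order.TTheory GRing.Theory Num.Theory.
Import numFieldNormedType.Exports.
Local Open Scope classical_set_scope.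
Local Open Scope ring_scope.

(* Write a_j(n) = alpha(n+j) / (alpha(n) R(n)^j).  After normalization, the
   coefficient of X^k in either polynomial is delta^(k-d) \sum_j w_j a_j(n) for
   explicit binomial weights w_j, and inserting the expansion of a_j(n) turns it
   into \sum_r C_r(n) delta^(r+k-d) M_r + o(1), where M_r = \sum_j w_j j^r.  Up
   to the factor binom(d,k) and a sign, M_r is the (d-k)-th finite difference of
   t |-> t^r, so it vanishes for r < d-k and equals (d-k)! for r = d-k: only
   the term r = d-k survives, and binom(d,k) (d-k)! = d!/k!. *)

Lemma coef_scaleXsub1_exp (R : comNzRingType) (a : R) (m k : nat) :
  ((a *: 'X - 1) ^+ m)`_k = 'C(m, k)%:R * a ^+ k * (-1) ^+ (m - k).
Proof.
have -> : (a *: 'X - 1) ^+ m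
    = \poly_(i < m.+1) ('C(m, i)%:R * a ^+ i * (-1) ^+ (m - i)) :> {poly R}.
  rewrite addrC -polyCN exprDn poly_def; apply: eq_bigr => i _.
  by rewrite exprZn -rmorphXn -scalerAr mul_polyC -scaler_nat !scalerA.
by rewrite coef_poly; case: ltnP => // /bin_small ->; rewrite !mul0r.
Qed.

Lemma coef_comp_monomials (R : comNzRingType) (N : nat) (b : 'I_N -> R)
    (e : 'I_N -> nat) (u a : R) (k : nat) :
  ((\sum_(j < N) b j *: 'X^(e j)) \Po (u *: (a *: 'X - 1)))`_k
  = a ^+ k * \sum_(j < N) b j * u ^+ e j * 'C(e j, k)%:R * (-1) ^+ (e j - k).
Proof.
rewrite linear_sum coef_sum mulr_sumr; apply: eq_bigr => j _.
by rewrite linearZ /= comp_Xn_poly exprZn !coefZ coef_scaleXsub1_exp; ring.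
Qed.

(* Jweight d k j and Kweight d k j are the coefficients of X^k in
   binom(d,j) (X - 1)^j and binom(d,j) (X - 1)^(d-j) respectively. *)
Definition Jweight {R : pzRingType} (d k j : nat) : R :=
  'C(d, j)%:R * 'C(j, k)%:R * (-1) ^+ (j - k).

Definition Kweight {R : pzRingType} (d k j : nat) : R :=
  'C(d, j)%:R * 'C(d - j, k)%:R * (-1) ^+ (d - j - k).

Lemma coef_Jpoly_normalized (R : realType) (alpha : nat -> R) (d n k : nat) (rho delta : R) :
  ((delta ^- d / alpha n) *: (Jpoly alpha d n \Po (rho^-1 *: (delta *: 'X - 1))))`_k
  = delta ^+ k / delta ^+ d *
      \sum_(j < d.+1) Jweight d k j * (alpha (n + j)%N / (alpha n * rho ^+ j)).
Proof.
rewrite coefZ [_`_k]coef_comp_monomials !mulr_sumr.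
by apply: eq_bigr => j _; rewrite /Jweight exprVn invfM; ring.
Qed.

Lemma coef_Kpoly_normalized (R : realType) (alpha : nat -> R) (d n k : nat) (rho delta : R) :
  alpha n != 0 -> rho != 0 -> delta != 0 ->
  (((rho * delta) ^- d / alpha n) *: (Kpoly alpha d n \Po (rho *: (delta *: 'X - 1))))`_k
  = delta ^+ k / delta ^+ d *
      \sum_(j < d.+1) Kweight d k j * (alpha (n + j)%N / (alpha n * rho ^+ j)).
Proof.
move=> alpha_neq0 rho_neq0 delta_neq0.
rewrite coefZ [_`_k]coef_comp_monomials !mulr_sumr; apply: eq_bigr => j _.
rewrite /Kweight exprMn -[in rho ^+ d](subnKC (leq_ord j)) exprD.
by field; rewrite alpha_neq0 !expf_neq0.
Qed.

Lemma bin_mul_bin (d k i : nat) :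
  ('C(d, i + k) * 'C(i + k, k) = 'C(d, k) * 'C(d - k, i))%N.
Proof.
have [le_ikd | lt_d_ik] := leqP (i + k) d; last first.
  rewrite bin_small // mul0n; have [le_kd | lt_dk] := leqP k d.
    by rewrite [X in (_ * X)%N]bin_small ?muln0 //; lia.
  by rewrite bin_small.
have facts_gt0 : (0 < k`! * (i`! * (d - k - i)`!))%N by rewrite !muln_gt0 !fact_gt0.
apply/eqP; rewrite -(eqn_pmul2r facts_gt0); apply/eqP.
have f_ik := bin_fact (leq_addl i k); rewrite addnK in f_ik.
have f_d := bin_fact le_ikd.
have f_dk := bin_fact (leq_trans (leq_addl i k) le_ikd).
have f_dki : (i <= d - k)%N by lia.
have {}f_dki := bin_fact f_dki.
rewrite (_ : d - (i + k) = d - k - i)%N in f_d; last by lia.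
transitivity d`!; first by rewrite -f_d -f_ik; ring.
by rewrite -f_dk -f_dki; ring.
Qed.

Lemma bin_mul_bin_sub (d j k : nat) :
  ('C(d, j) * 'C(d - j, k) = 'C(d, k) * 'C(d - k, j))%N.
Proof.
rewrite -bin_mul_bin -bin_mul_bin [(k + j)%N]addnC.
by congr (_ * _)%N; rewrite -[RHS]bin_sub ?leq_addl // addnK.
Qed.

(* (-1)^m times the m-th forward difference of t |-> t^r at x. *)
Definition alt_pow_sum {R : comNzRingType} (m r : nat) (x : R) : R :=
  \sum_(i < m.+1) 'C(m, i)%:R * (-1) ^+ i * (i%:R + x) ^+ r.

Section AltPowSum.
Variable R : comNzRingType.
Implicit Types (x : R) (m r : nat).

Lemma alt_pow_sumS m r x :
  alt_pow_sum m.+1 r x = alt_pow_sum m r x - alt_pow_sum m r (x + 1).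
Proof.
rewrite /alt_pow_sum big_ord_recl /=.
under eq_bigr => i _ do rewrite /bump /= binS natrD !mulrDl.
rewrite big_split /= addrA; congr (_ + _).
  rewrite big_ord_recr /= (bin_small (ltnSn m)) !mul0r addr0 [RHS]big_ord_recl !bin0.
  by congr (_ + _); apply: eq_bigr => i _; rewrite /bump /= add1n.
rewrite -sumrN; apply: eq_bigr => i _.
by rewrite /bump /= add1n exprS -natr1 addrA [_ + 1 + x]addrAC; ring.
Qed.

Lemma alt_pow_sum_shift m r x :
  alt_pow_sum m r (x + 1) = \sum_(s < r.+1) 'C(r, s)%:R * alt_pow_sum m (r - s) x.
Proof.
rewrite /alt_pow_sum; under eq_bigr => i _ do rewrite addrA exprDn mulr_sumr.
rewrite exchange_big /=; apply: eq_bigr => s _.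
by rewrite mulr_sumr; apply: eq_bigr => i _; rewrite expr1n mulr1 -mulr_natl; ring.
Qed.

Lemma alt_pow_sum_le m r x : (r <= m)%N ->
  alt_pow_sum m r x = if r == m then (-1) ^+ m * m`!%:R else 0.
Proof.
elim: m r x => [|m IHm] r x le_rm.
  by move: le_rm; rewrite leqn0 => /eqP->; rewrite /alt_pow_sum big_ord1 /= !expr0 !mulr1.
(* Together the two recurrences give
   alt_pow_sum m.+1 r x = - \sum_(1 <= s <= r) 'C(r, s) * alt_pow_sum m (r - s) x. *)
rewrite alt_pow_sumS alt_pow_sum_shift big_ord_recl bin0 mul1r subn0 opprD addrA subrr add0r.
case: r le_rm => [|r] le_rm; first by rewrite big_ord0 oppr0.
rewrite big_ord_recl big1 => [|s _]; last first.
  by rewrite !lift0 IHm ?ifN ?mulr0 //; have := ltn_ord s; lia.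
rewrite lift0 IHm /=; last by lia.
rewrite addr0 eqSS subSS subn0 bin1; case: eqP => [->|_]; last by rewrite mulr0 oppr0.
by rewrite factS natrM exprS; ring.
Qed.

End AltPowSum.

Definition moment {R : nzSemiRingType} (d : nat) (w : nat -> R) (r : nat) : R :=
  \sum_(j < d.+1) w j * j%:R ^+ r.

Section Moments.
Variable R : comNzRingType.

Lemma moment_Jweight_alt (d k r : nat) : (k <= d)%N ->
  moment d (@Jweight R d k) r = 'C(d, k)%:R * alt_pow_sum (d - k) r k%:R.
Proof.
move=> le_kd; rewrite /moment /Jweight.
rewrite -(big_mkord xpredT
  (fun j => 'C(d, j)%:R * 'C(j, k)%:R * (-1) ^+ (j - k) * (j%:R : R) ^+ r)).
rewrite (big_cat_nat (leq0n k)) /=; last by lia.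
rewrite big_nat big1 ?add0r => [|j /andP[_ lt_jk]]; last first.
  by rewrite (@bin_small j) // mulr0 !mul0r.
rewrite -{1}(add0n k) big_addn subSn // big_mkord /alt_pow_sum mulr_sumr.
by apply: eq_bigr => i _; rewrite addnK -natrM bin_mul_bin natrM natrD; ring.
Qed.

Lemma moment_Kweight_alt (d k r : nat) : (k <= d)%N ->
  moment d (@Kweight R d k) r = 'C(d, k)%:R * (-1) ^+ (d - k) * alt_pow_sum (d - k) r 0.
Proof.
move=> le_kd; rewrite /moment /Kweight.
rewrite -(big_mkord xpredT
  (fun j => 'C(d, j)%:R * 'C(d - j, k)%:R * (-1) ^+ (d - j - k) * (j%:R : R) ^+ r)).
rewrite (big_cat_nat (leq0n (d - k).+1)) /=; last by lia.
rewrite [X in _ + X]big_nat [X in _ + X]big1 ?addr0 => [|j /andP[lt_dkj le_jd]]; last first.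
  by rewrite (@bin_small (d - j)) ?mulr0 ?mul0r //; lia.
have sign_split i : (i <= d - k)%N ->
    (-1) ^+ (d - i - k) = (-1) ^+ (d - k) * (-1) ^+ i :> R.
  by move=> le_i; rewrite subnAC -{2}(subnK le_i) exprD -mulrA -expr2 sqrr_sign mulr1.
rewrite big_mkord /alt_pow_sum !mulr_sumr; apply: eq_bigr => i _.
by rewrite -natrM bin_mul_bin_sub natrM (sign_split _ (leq_ord i)) addr0; ring.
Qed.

Lemma moment_Jweight (d k r : nat) :
  (k <= d)%N -> (r <= d - k)%N ->
  moment d (@Jweight R d k) r
  = if r == (d - k)%N then (-1) ^+ (d - k) * ('C(d, k) * (d - k)`!)%:R else 0.
Proof.
move=> le_kd le_r; rewrite moment_Jweight_alt // alt_pow_sum_le //.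
by case: eqP => _; [rewrite natrM; ring | rewrite mulr0].
Qed.

Lemma moment_Kweight (d k r : nat) :
  (k <= d)%N -> (r <= d - k)%N ->
  moment d (@Kweight R d k) r = if r == (d - k)%N then ('C(d, k) * (d - k)`!)%:R else 0.
Proof.
move=> le_kd le_r; rewrite moment_Kweight_alt // alt_pow_sum_le //.
case: eqP => _; last by rewrite mulr0.
by rewrite natrM -mulrA [(-1) ^+ _ * _]mulrA -expr2 sqrr_sign mul1r.
Qed.

End Moments.

Section WeightedExpansion.
Context {R : realType} {d k : nat} {delta : nat -> R} {C : nat -> nat -> R}
  {c : nat -> R} (a : nat -> nat -> R) {w : nat -> R}.
Hypotheses (le_kd : (k <= d)%N) (delta_gt0 : forall n, 0 < delta n)
  (delta_cvg0 : delta @ \oo --> 0) (C_cvg : forall r, (r <= d)%N -> C r @ \oo --> c r)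
  (a_expansion : forall j, (j <= d)%N ->
     (fun n => (a j n - \sum_(r < d.+1) C r n * delta n ^+ r * j%:R ^+ r) / delta n ^+ d)
       @ \oo --> 0)
  (low_moments_eq0 : forall r, (r < d - k)%N -> moment d w r = 0).

(* The exponent r - (d - k) is truncated: for r < d - k the term is 0 anyway,
   since then moment d w r = 0. *)
Lemma weighted_sum_expansion n :
  delta n ^+ k / delta n ^+ d * \sum_(j < d.+1) w j * a j n
  = \sum_(r < d.+1) C r n * delta n ^+ (r - (d - k)) * moment d w r
    + delta n ^+ k * \sum_(j < d.+1) w j *
        ((a j n - \sum_(r < d.+1) C r n * delta n ^+ r * j%:R ^+ r) / delta n ^+ d).
Proof.
have dn_neq0 : delta n != 0 by rewrite gt_eqF.
have dnX_neq0 m : delta n ^+ m != 0 by rewrite expf_neq0.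
pose e j := (a j n - \sum_(r < d.+1) C r n * delta n ^+ r * j%:R ^+ r) / delta n ^+ d.
have a_split j : a j n = \sum_(r < d.+1) C r n * delta n ^+ r * j%:R ^+ r + delta n ^+ d * e j.
  by rewrite /e mulrC divfK // addrC subrK.
under eq_bigr do rewrite a_split mulrDr.
rewrite big_split mulrDr /=; congr (_ + _); last first.
  by rewrite !mulr_sumr; apply: eq_bigr => j _; rewrite /e; field.
under eq_bigr do rewrite mulr_sumr.
rewrite exchange_big mulr_sumr; apply: eq_bigr => r _ /=.
have -> : \sum_(j < d.+1) w j * (C r n * delta n ^+ r * j%:R ^+ r)
          = C r n * delta n ^+ r * moment d w r.
  by rewrite /moment mulr_sumr; apply: eq_bigr => j _; ring.
have [lt_r_dk | le_dk_r] := ltnP r (d - k).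
  by rewrite low_moments_eq0 // !mulr0.
rewrite -[in delta n ^+ r](subnK le_dk_r) exprD -[in delta n ^+ d](subnK le_kd) exprD.
by field; rewrite !dnX_neq0.
Qed.

Lemma cvg_weighted_sum :
  (fun n => delta n ^+ k / delta n ^+ d * \sum_(j < d.+1) w j * a j n) @ \oo
    --> c (d - k) * moment d w (d - k).
Proof.
under eq_cvg do rewrite weighted_sum_expansion.
have deltaX_cvg m : (fun n => delta n ^+ m) @ \oo --> (0 : R) ^+ m.
  exact: (continuous_cvg _ (@exprn_continuous R m 0) delta_cvg0).
have -> : c (d - k) * moment d w (d - k)
    = \sum_(r < d.+1) c r * 0 ^+ (r - (d - k)) * moment d w r
      + 0 ^+ k * \sum_(j < d.+1) w j * 0.
  rewrite [X in _ + _ * X]big1 ?mulr0 ?addr0 => [|j _]; last exact: mulr0.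
  have lt_dk_d1 : (d - k < d.+1)%N by rewrite ltnS leq_subr.
  rewrite (bigD1 (Ordinal lt_dk_d1)) //= subnn expr0 mulr1 big1 ?addr0 // => r ne_r.
  have [lt_r_dk | le_dk_r] := ltnP r (d - k); first by rewrite low_moments_eq0 ?mulr0.
  rewrite -val_eqE /= in ne_r.
  by rewrite expr0n subn_eq0 leqNgt ltn_neqAle le_dk_r eq_sym ne_r mulr0 mul0r.
apply: cvgD.
  apply: cvg_big => [|r _]; first exact: add_continuous.
  by apply: cvgMr_tmp; apply: cvgM; [exact/C_cvg/leq_ord | exact: deltaX_cvg].
apply: cvgM; first exact: deltaX_cvg.
apply: cvg_big => [|j _]; first exact: add_continuous.
by apply: cvgMl_tmp; apply: a_expansion; exact: leq_ord.
Qed.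

End WeightedExpansion.

Lemma fact_div_fact (R : realFieldType) (d k : nat) : (k <= d)%N ->
  d`!%:R / k`!%:R = ('C(d, k) * (d - k)`!)%:R :> R.
Proof.
move=> le_kd; have kfact_neq0 : k`!%:R != 0 :> R by rewrite pnatr_eq0 -lt0n fact_gt0.
by rewrite -(bin_fact le_kd) mulnA mulnAC natrM mulfK.
Qed.

Lemma coef_limJ (R : realType) (c : nat -> R) (d k : nat) :
  (limJ c d)`_k
  = if (k <= d)%N then c (d - k)%N * ((-1) ^+ (d - k) * ('C(d, k) * (d - k)`!)%:R) else 0.
Proof.
rewrite /limJ coefZ -(poly_def _ (fun k => (-1) ^+ (d - k) * c (d - k)%N / k`!%:R)).
rewrite coef_poly ltnS; case: leqP => [le_kd|_]; last by rewrite mulr0.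
by rewrite -fact_div_fact //; ring.
Qed.

Lemma coef_limK (R : realType) (c : nat -> R) (d k : nat) :
  (limK c d)`_k = if (k <= d)%N then c (d - k)%N * ('C(d, k) * (d - k)`!)%:R else 0.
Proof.
rewrite /limK coefZ -(poly_def _ (fun k => c (d - k)%N / k`!%:R)).
rewrite coef_poly ltnS; case: leqP => [le_kd|_]; last by rewrite mulr0.
by rewrite -fact_div_fact //; ring.
Qed.

Section NormalizedLimits.
Context {R : realType} {alpha : nat -> R} {d : nat} {rho delta : nat -> R}
  (C : nat -> nat -> R) {c : nat -> R}.
Hypotheses (alpha_gt0 : forall n, 0 < alpha n) (rho_neq0 : forall n, rho n != 0)
  (delta_gt0 : forall n, 0 < delta n) (delta_cvg0 : delta @ \oo --> 0)
  (C_cvg : forall r, (r <= d)%N -> C r @ \oo --> c r)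
  (ratio_expansion : forall j, (j <= d)%N ->
     (fun n => (alpha (n + j)%N / (alpha n * rho n ^+ j)
                - \sum_(r < d.+1) C r n * delta n ^+ r * j%:R ^+ r) / delta n ^+ d)
       @ \oo --> 0).

Lemma cvg_coef_Jpoly k :
  (fun n => ((delta n ^- d / alpha n) *:
     (Jpoly alpha d n \Po ((rho n)^-1 *: (delta n *: 'X - 1))))`_k)
    @ \oo --> (limJ c d)`_k.
Proof.
under eq_cvg do rewrite coef_Jpoly_normalized.
rewrite coef_limJ; case: leqP => [le_kd | lt_dk].
  have low r : (r < d - k)%N -> moment d (Jweight d k) r = 0 :> R.
    by move=> lt_r; rewrite moment_Jweight ?ifN ?ltn_eqF // ltnW.
  have := cvg_weighted_sum (fun j n => alpha (n + j)%N / (alpha n * rho n ^+ j))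
    le_kd delta_gt0 delta_cvg0 C_cvg ratio_expansion low.
  by rewrite moment_Jweight ?eqxx.
apply: cvg_near_cst; apply: nearW => n.
rewrite big1 ?mulr0 // => j _.
rewrite /Jweight (@bin_small j) ?mulr0 ?mul0r //.
exact: leq_trans (ltn_ord j) lt_dk.
Qed.

Lemma cvg_coef_Kpoly k :
  (fun n => (((rho n * delta n) ^- d / alpha n) *:
     (Kpoly alpha d n \Po (rho n *: (delta n *: 'X - 1))))`_k)
    @ \oo --> (limK c d)`_k.
Proof.
under eq_cvg => n do rewrite (@coef_Kpoly_normalized _ _ _ n k _ _
  (lt0r_neq0 (alpha_gt0 n)) (rho_neq0 n) (lt0r_neq0 (delta_gt0 n))).
rewrite coef_limK; case: leqP => [le_kd | lt_dk].
  have low r : (r < d - k)%N -> moment d (Kweight d k) r = 0 :> R.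
    by move=> lt_r; rewrite moment_Kweight ?ifN ?ltn_eqF // ltnW.
  have := cvg_weighted_sum (fun j n => alpha (n + j)%N / (alpha n * rho n ^+ j))
    le_kd delta_gt0 delta_cvg0 C_cvg ratio_expansion low.
  by rewrite moment_Kweight ?eqxx.
apply: cvg_near_cst; apply: nearW => n.
rewrite big1 ?mulr0 // => j _.
rewrite /Kweight (@bin_small (d - j)) ?mulr0 ?mul0r //.
exact: leq_ltn_trans (leq_subr j d) lt_dk.
Qed.

End NormalizedLimits.

Theorem theorem4p1 (R : realType) (alpha : nat -> R) (d : nat)
    (Rs delta : nat -> R) (C : nat -> nat -> R) (c : nat -> R) :
  (forall n, 0 < alpha n) ->
  (0 < d)%N ->
  (forall n, Rs n != 0) ->
  (forall n, 0 < delta n) ->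
  delta @ \oo --> 0 ->
  (forall r, (r <= d)%N -> C r @ \oo --> c r) ->
  (* expansion with an o(delta(n)^d) error, for j = 0, ..., d *)
  (forall j, (j <= d)%N ->
     (fun n => (alpha (n + j)%N / (alpha n * Rs n ^+ j)
                - (C 0%N n + \sum_(1 <= r < d.+1) C r n * delta n ^+ r * (j%:R) ^+ r))
               / delta n ^+ d) @ \oo --> 0) ->
  (forall k, (fun n => ((delta n ^- d / alpha n) *:
        (Jpoly alpha d n \Po ((Rs n)^-1 *: (delta n *: 'X - 1))))`_k)
      @ \oo --> (limJ c d)`_k) /\
  (forall k, (fun n => (((Rs n * delta n) ^- d / alpha n) *:
        (Kpoly alpha d n \Po (Rs n *: (delta n *: 'X - 1))))`_k)
      @ \oo --> (limK c d)`_k).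
Proof.
move=> alpha_gt0 _ Rs_neq0 delta_gt0 delta_cvg0 C_cvg expansion.
have sum_split n (x : R) : \sum_(r < d.+1) C r n * delta n ^+ r * x ^+ r
    = C 0%N n + \sum_(1 <= r < d.+1) C r n * delta n ^+ r * x ^+ r.
  rewrite -(big_mkord xpredT (fun r => C r n * delta n ^+ r * x ^+ r)).
  by rewrite big_ltn // !expr0 !mulr1.
split=> k; [apply: (cvg_coef_Jpoly C) | apply: (cvg_coef_Kpoly C)] => // j le_jd;
  under eq_cvg do rewrite sum_split; exact: expansion.
Qed.
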